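(* Let $\sigma$ be a $d$-dimensional quantum state with $\sigma\ge\gamma I$ for some $\gamma>0$, let $\rho_1,\dots,\rho_T$ be $d$-dimensional quantum states and $\rho=\frac1T\sum_{t=1}^T\rho_t$. Then $$\frac1T\sum_{t=1}^T\big(1+D_{\chi^2}(\rho_t\,\|\,\sigma)\big)\le\sqrt{\frac d\gamma}\,D_{\chi^2}(\rho\,\|\,\sigma)^{1/2}+d.$$
   Context: Bures $\chi^2$-divergence: writing $\sigma=U\,\mathrm{diag}(q_1,\dots,q_d)U^\dagger$ with $U$ unitary and $\rho'=U^\dagger\rho U$, $D_{\chi^2}(\rho\,\|\,\sigma)=\sum_{i,j=1}^d\frac{2}{q_i+q_j}|\rho'_{ij}|^2-1$. *)

From HB Require Import structures.
From mathcomp Require Import all_boot all_order all_algebra.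
Set Implicit Arguments. Unset Strict Implicit. Unset Printing Implicit Defensive.
Import Order.TTheory GRing.Theory Num.Theory.
Local Open Scope ring_scope.

Definition adjmx {C : numClosedFieldType} m n (A : 'M[C]_(m, n)) : 'M[C]_(n, m) :=
  (map_mx Num.conj A)^T.

Definition psdmx {C : numClosedFieldType} d (A : 'M[C]_d) : Prop :=
  A = adjmx A /\ forall v : 'rV[C]_d, 0 <= (v *m A *m adjmx v) 0 0.

Definition density {C : numClosedFieldType} d (rho : 'M[C]_d) : Prop :=
  psdmx rho /\ \tr rho = 1.

(* Bures chi^2 divergence, computed from a decomposition
   sigma = U diag(q_1..q_d) U^dagger  with U unitary:
   D(rho || sigma) = sum_{i,j} 2/(q_i+q_j) |rho'_{ij}|^2 - 1,  rho' = U^dagger rho U. *)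
Definition bures_chi2 {C : numClosedFieldType} d (U : 'M[C]_d) (q : 'I_d -> C)
    (rho : 'M[C]_d) : C :=
  let rho' := adjmx U *m rho *m U in
  \sum_(i < d) \sum_(j < d) (2 / (q i + q j)) * `|rho' i j| ^+ 2 - 1.

(* Write [x_t = U^* rho_t U] and let [p] be the diagonal of [U^* rho U], the
   average of the diagonals of the [x_t].  Since [|x_ij|^2 <= x_ii x_jj] and
   [2 / (q_i + q_j) <= (1/q_i + 1/q_j) / 2], each [1 + D(rho_t || sigma)] is at
   most [sum_i (x_t)_ii / q_i], so the left-hand side is at most
   [sum_i p_i / q_i = d + sum_i (p_i - q_i) / q_i].  Cauchy-Schwarz with the
   weights [1 / q_i <= 1 / gamma] bounds the last sum by
   [sqrt (d / gamma) * sqrt (sum_i (p_i - q_i)^2 / q_i)], and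
   [sum_i (p_i - q_i)^2 / q_i = sum_i p_i^2 / q_i - 1] is the diagonal part of
   [D(rho || sigma)]. *)

From HB Require Import structures.
From mathcomp Require Import all_boot all_order all_algebra.
From mathcomp Require Import ring.
Import Order.TTheory GRing.Theory Num.Theory.
Local Open Scope ring_scope.
Set Implicit Arguments. Unset Strict Implicit.

Section ScalarInequalities.
Variable F : numFieldType.

Lemma inv_mean_le_mean_inv (a b : F) :
  0 < a -> 0 < b -> 2 / (a + b) <= (a^-1 + b^-1) / 2.
Proof.
move=> a_gt0 b_gt0; have ab_gt0 : 0 < a + b by rewrite addr_gt0.
have gap : (a^-1 + b^-1) / 2 - 2 / (a + b) = (a - b) ^+ 2 / (2 * a * b * (a + b)).
  by field; rewrite ?mulf_neq0 ?pnatr_eq0 ?gt_eqF.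
rewrite -subr_ge0 gap divr_ge0 //; last by rewrite ltW // !mulr_gt0.
by apply: real_exprn_even_ge0; rewrite ?rpredB ?gtr0_real.
Qed.

Lemma weighted_cauchy_schwarz (I : finType) (u r : I -> F) :
  (forall i, 0 <= u i) -> (forall i, r i \is Num.real) ->
  (\sum_i u i * r i) ^+ 2 <= (\sum_i u i) * \sum_i u i * r i ^+ 2.
Proof.
move=> u_ge0 r_real.
set a := \sum_i u i; set b := \sum_i u i * r i; set c := \sum_i u i * r i ^+ 2.
have [a0|a_neq0] := eqVneq a 0.
  have u0 := psumr_eq0P (fun i _ => u_ge0 i) a0.
  by rewrite a0 mul0r /b big1 ?expr0n // => i _; rewrite u0 ?mul0r.
have a_gt0 : 0 < a by rewrite lt_def a_neq0 sumr_ge0.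
have b_real : b \is Num.real.
  by apply: rpred_sum => i _; exact: realM (ger0_real (u_ge0 i)) (r_real i).
have expand x y :
    \sum_i u i * (x * r i - y) ^+ 2 = x ^+ 2 * c - 2 * x * y * b + y ^+ 2 * a.
  rewrite /a /b /c !mulr_sumr -sumrB -big_split /=.
  by apply: eq_bigr => i _; ring.
have expand_ab : a * (a * c - b ^+ 2) = \sum_i u i * (a * r i - b) ^+ 2.
  by rewrite expand; ring.
rewrite -subr_ge0 -(pmulr_rge0 _ a_gt0) expand_ab sumr_ge0 // => i _.
rewrite mulr_ge0 //; apply: real_exprn_even_ge0 => //.
by apply: realB b_real; exact: realM (gtr0_real a_gt0) (r_real i).
Qed.

End ScalarInequalities.

Section Adjoint.
Variable C : numClosedFieldType.

Lemma adjmxE m n (A : 'M[C]_(m, n)) : adjmx A = (A ^t* )%sesqui.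
Proof. by rewrite /adjmx map_trmx. Qed.

Lemma adjmxM m n p (A : 'M[C]_(m, n)) (B : 'M[C]_(n, p)) :
  adjmx (A *m B) = adjmx B *m adjmx A.
Proof. by rewrite /adjmx map_mxM trmx_mul. Qed.

Lemma adjmxK m n (A : 'M[C]_(m, n)) : adjmx (adjmx A) = A.
Proof. by apply/matrixP=> i j; rewrite !mxE conjCK. Qed.

Lemma adjmxD m n (A B : 'M[C]_(m, n)) : adjmx (A + B) = adjmx A + adjmx B.
Proof. by apply/matrixP=> i j; rewrite !mxE rmorphD. Qed.

Lemma adjmxZ m n a (A : 'M[C]_(m, n)) : adjmx (a *: A) = a^* *: adjmx A.
Proof. by apply/matrixP=> i j; rewrite !mxE rmorphM. Qed.

Lemma adjmx_delta n (i : 'I_n) : adjmx (delta_mx 0 i : 'rV[C]_n) = delta_mx i 0.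
Proof. by apply/matrixP=> k l; rewrite !mxE; case: eqP; case: eqP; rewrite ?conjC0 ?conjC1. Qed.

Lemma unitarymx_adjl n (U : 'M[C]_n) : U \is unitarymx -> adjmx U *m U = 1%:M.
Proof. by move=> U_unitary; rewrite adjmxE -[(U ^t* )%sesqui]mul1mx mulmxKtV. Qed.

Lemma unitarymx_adjr n (U : 'M[C]_n) : U \is unitarymx -> U *m adjmx U = 1%:M.
Proof. by rewrite adjmxE => /unitarymxP. Qed.

Lemma mxtrace_unitary_conj n (U A : 'M[C]_n) :
  U \is unitarymx -> \tr (adjmx U *m A *m U) = \tr A.
Proof. by move=> U_unitary; rewrite mxtrace_mulC mulmxA unitarymx_adjr ?mul1mx. Qed.

End Adjoint.

Lemma hermitian2_minor (C : numClosedFieldType) (a b c : C) :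
  (forall x y, 0 <= x * x^* * a + x * y^* * c + y * x^* * c^* + y * y^* * b) ->
  `|c| ^+ 2 <= a * b.
Proof.
move=> form_ge0.
have a_ge0 : 0 <= a.
  by have := form_ge0 1 0; rewrite conjC0 conjC1 !(mul0r, mulr0, addr0) !mul1r.
have b_ge0 : 0 <= b.
  by have := form_ge0 0 1; rewrite conjC0 conjC1 !(mul0r, mulr0, add0r, addr0) !mul1r.
rewrite normCK.
have [ab0|ab_neq0] := eqVneq (a + b) 0.
  have /andP[/eqP a0 /eqP b0] : (a == 0) && (b == 0) by rewrite -paddr_eq0 // ab0.
  have := form_ge0 1 (- c); rewrite a0 b0 conjC1 rmorphN.
  have -> : 1 * 1 * 0 + 1 * - c^* * c + - c * 1 * c^* + - c * - c^* * 0 = - (c * c^* *+ 2).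
    by ring.
  by rewrite oppr_ge0 pmulrn_lle0 // mulr0.
have ab_gt0 : 0 < a + b by rewrite lt_def ab_neq0 addr_ge0.
(* The forms at [(b, -c)] and [(-c^*, a)] are [b] and [a] times [ab - |c|^2]. *)
rewrite -subr_ge0 -(pmulr_rge0 _ ab_gt0).
have := addr_ge0 (form_ge0 b (- c)) (form_ge0 (- c^*) a).
rewrite !rmorphN (geC0_conj a_ge0) (geC0_conj b_ge0) ?conjCK.
by congr (0 <= _); ring.
Qed.

Section PositiveSemidefinite.
Variables (C : numClosedFieldType) (n : nat).
Implicit Types (A B U : 'M[C]_n).

Lemma psdmx_conj U A : psdmx A -> psdmx (adjmx U *m A *m U).
Proof.
case=> A_herm A_ge0; split; first by rewrite !adjmxM adjmxK -A_herm mulmxA.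
by move=> v; have := A_ge0 (v *m adjmx U); rewrite adjmxM adjmxK !mulmxA.
Qed.

Lemma psdmx0 : psdmx (0 : 'M[C]_n).
Proof.
split; first by apply/matrixP=> i j; rewrite !mxE conjC0.
by move=> v; rewrite mulmx0 mul0mx mxE.
Qed.

Lemma psdmxD A B : psdmx A -> psdmx B -> psdmx (A + B).
Proof.
case=> A_herm A_ge0 [B_herm B_ge0]; split; first by rewrite adjmxD -A_herm -B_herm.
by move=> v; rewrite mulmxDr mulmxDl mxE addr_ge0.
Qed.

Lemma psdmxZ c A : 0 <= c -> psdmx A -> psdmx (c *: A).
Proof.
move=> c_ge0 [A_herm A_ge0]; split; first by rewrite adjmxZ -A_herm geC0_conj.
by move=> v; rewrite -scalemxAr -scalemxAl mxE mulr_ge0.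
Qed.

Lemma psdmx_sum (I : finType) (A : I -> 'M[C]_n) :
  (forall i, psdmx (A i)) -> psdmx (\sum_i A i).
Proof. by move=> A_psd; elim/big_ind: _ => //; [exact: psdmx0 | exact: psdmxD]. Qed.

Lemma density_mean T (rhos : 'I_T -> 'M[C]_n) :
  (0 < T)%N -> (forall t, density (rhos t)) ->
  density ((T%:R)^-1 *: \sum_(t < T) rhos t).
Proof.
move=> T_gt0 rhos_density; split.
  by apply: psdmxZ; [rewrite invr_ge0 ler0n | apply: psdmx_sum => t; case: (rhos_density t)].
rewrite mxtraceZ raddf_sum /= (eq_bigr (fun=> 1)) => [|t _]; last by case: (rhos_density t).
by rewrite sumr_const card_ord -[_ *+ _]mulr_natl mulr1 mulVf // pnatr_eq0 -lt0n.
Qed.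

Lemma qform_delta A i j :
  ((delta_mx 0 i : 'rV[C]_n) *m A *m adjmx (delta_mx 0 j : 'rV[C]_n)) 0 0 = A i j.
Proof. by rewrite adjmx_delta -rowE -colE !mxE. Qed.

Lemma psdmx_diag_ge0 A i : psdmx A -> 0 <= A i i.
Proof. by case=> _ /(_ (delta_mx 0 i)); rewrite qform_delta. Qed.

Lemma psdmx_herm A i j : psdmx A -> A j i = (A i j)^*.
Proof. by case=> A_herm _; rewrite {1}A_herm !mxE. Qed.

Lemma qform_delta2 (A : 'M[C]_n) i j a b :
  let v := a *: (delta_mx 0 i : 'rV[C]_n) + b *: delta_mx 0 j in
  (v *m A *m adjmx v) 0 0 =
  a * a^* * A i i + a * b^* * A i j + b * a^* * A j i + b * b^* * A j j.
Proof.
rewrite /= adjmxD !adjmxZ !mulmxDl !mulmxDr -!scalemxAl -!scalemxAr.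
have entryE k l : ((delta_mx 0 k : 'rV[C]_n) *m A *m adjmx (delta_mx 0 l)) = (A k l)%:M.
  by apply/matrixP=> ? ?; rewrite !ord1 qform_delta mxE.
by rewrite !entryE !mxE eqxx !mulr1n; ring.
Qed.

Lemma psdmx_minor (A : 'M[C]_n) i j : psdmx A -> `|A i j| ^+ 2 <= A i i * A j j.
Proof.
move=> A_psd; apply: hermitian2_minor => x y.
by rewrite -(psdmx_herm i j A_psd) -qform_delta2; exact: A_psd.2.
Qed.

End PositiveSemidefinite.

Section Spectral.
Variables (C : numClosedFieldType) (n : nat) (sigma U : 'M[C]_n) (q : 'I_n -> C).
Hypothesis U_unitary : U \is unitarymx.
Hypothesis sigmaE : sigma = U *m diag_mx (\row_i q i) *m adjmx U.

Lemma unitary_conj_spectral : adjmx U *m sigma *m U = diag_mx (\row_i q i).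
Proof. by rewrite sigmaE !mulmxA unitarymx_adjl // mul1mx -mulmxA unitarymx_adjl ?mulmx1. Qed.

Lemma mxtrace_spectral : \tr sigma = \sum_i q i.
Proof.
rewrite -(mxtrace_unitary_conj sigma U_unitary) unitary_conj_spectral mxtrace_diag.
by apply: eq_bigr => i _; rewrite mxE.
Qed.

Lemma spectral_ge gamma i : psdmx (sigma - gamma%:M) -> gamma <= q i.
Proof.
move=> /(psdmx_conj U) /(psdmx_diag_ge0 i).
rewrite mulmxBr mulmxBl unitary_conj_spectral mul_mx_scalar -scalemxAl.
by rewrite unitarymx_adjl // !mxE eqxx mulr1n mulr1 subr_ge0.
Qed.

End Spectral.

Section BuresChi2.
Variables (C : numClosedFieldType) (n : nat) (q : 'I_n -> C).
Hypothesis q_gt0 : forall i, 0 < q i.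

Lemma bures_sum_le_trace (A : 'M[C]_n) : psdmx A ->
  \sum_i \sum_j 2 / (q i + q j) * `|A i j| ^+ 2 <= \tr A * \sum_i A i i / q i.
Proof.
move=> A_psd.
have meanE : \tr A * \sum_i A i i / q i =
    \sum_i \sum_j ((q i)^-1 + (q j)^-1) / 2 * (A i i * A j j).
  rewrite [LHS](_ : _ = ((\sum_i A i i / q i) * (\sum_j A j j)
                         + (\sum_i A i i) * (\sum_j A j j / q j)) / 2); last first.
    by rewrite /mxtrace; field.
  rewrite !big_distrlr -big_split mulr_suml; apply: eq_bigr => i _.
  by rewrite -big_split mulr_suml; apply: eq_bigr => j _ /=; ring.
rewrite meanE; apply: ler_sum => i _; apply: ler_sum => j _.
apply: ler_pM; rewrite ?exprn_ge0 ?psdmx_minor ?inv_mean_le_mean_inv //.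
by rewrite divr_ge0 ?ltW ?addr_gt0.
Qed.

Variable U : 'M[C]_n.
Hypothesis U_unitary : U \is unitarymx.

Lemma bures_chi2_le_diag rho : density rho ->
  1 + bures_chi2 U q rho <= \sum_i (adjmx U *m rho *m U) i i / q i.
Proof.
case=> rho_psd rho_tr; rewrite /bures_chi2 addrC subrK.
have := bures_sum_le_trace (psdmx_conj U rho_psd).
by rewrite mxtrace_unitary_conj // rho_tr mul1r.
Qed.

Lemma bures_chi2_ge_diag rho : psdmx rho ->
  \sum_i (adjmx U *m rho *m U) i i ^+ 2 / q i - 1 <= bures_chi2 U q rho.
Proof.
move=> /(psdmx_conj U) rho'_psd; rewrite /bures_chi2 lerB // ler_sum // => i _.
rewrite (bigD1 i) //= -[X in X <= _]addr0 lerD //.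
  have -> : 2 / (q i + q i) = (q i)^-1 by field; rewrite !gt_eqF ?addr_gt0.
  by rewrite ger0_norm ?psdmx_diag_ge0 // mulrC.
apply: sumr_ge0 => j _; rewrite mulr_ge0 ?exprn_ge0 //.
by rewrite divr_ge0 ?ltW ?addr_gt0.
Qed.

End BuresChi2.

Lemma sum_ratio_le_chi2 (C : numClosedFieldType) d (p q : 'I_d -> C) gamma D :
  0 < gamma -> (forall i, gamma <= q i) -> (forall i, p i \is Num.real) ->
  \sum_i p i = 1 -> \sum_i q i = 1 -> \sum_i p i ^+ 2 / q i - 1 <= D ->
  \sum_i p i / q i <= sqrtC (d%:R / gamma) * sqrtC D + d%:R.
Proof.
move=> gamma_gt0 q_ge p_real p_sum q_sum chi2_le.
have q_gt0 i : 0 < q i := lt_le_trans gamma_gt0 (q_ge i).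
have q_neq0 i : q i != 0 by rewrite gt_eqF.
pose u i := (q i)^-1; pose r i := p i - q i.
have u_ge0 i : 0 <= u i by rewrite invr_ge0 ltW.
have r_real i : r i \is Num.real := realB (p_real i) (gtr0_real (q_gt0 i)).
have ratioE : \sum_i p i / q i = \sum_i u i * r i + d%:R.
  rewrite -[d in d%:R]card_ord -sumr_const -big_split /=.
  by apply: eq_bigr => i _; rewrite /u /r; field.
have chi2E : \sum_i p i ^+ 2 / q i - 1 = \sum_i u i * r i ^+ 2.
  have termE i : u i * r i ^+ 2 = p i ^+ 2 / q i - 2 * p i + q i.
    by rewrite /u /r; field.
  rewrite (eq_bigr _ (fun i _ => termE i)) !big_split /= sumrN -mulr_sumr.
  by rewrite p_sum q_sum; ring.
have u_sum_le : \sum_i u i <= d%:R / gamma.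
  rewrite -[d in d%:R]card_ord mulr_natl -sumr_const ler_sum // => i _.
  by rewrite lef_pV2 ?posrE.
have dgamma_ge0 : 0 <= d%:R / gamma by rewrite divr_ge0 ?ler0n ?ltW.
have weighted_ge0 : 0 <= \sum_i u i * r i ^+ 2.
  by apply: sumr_ge0 => i _; rewrite mulr_ge0 // real_exprn_even_ge0.
have D_ge0 : 0 <= D by rewrite (le_trans weighted_ge0) // -chi2E.
rewrite ratioE lerD2r.
set S := \sum_i u i * r i.
have S_real : S \is Num.real.
  by apply: rpred_sum => i _; exact: realM (ger0_real (u_ge0 i)) (r_real i).
have [S_le0|S_ge0] := real_leP S_real (real0 _).
  by rewrite (le_trans S_le0) // mulr_ge0 ?sqrtC_ge0.
rewrite -(sqrCK (ltW S_ge0)) -sqrtCM ?nnegrE // ler_sqrtC ?nnegrE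
  ?exprn_ge0 ?(ltW S_ge0) ?(mulr_ge0 dgamma_ge0 D_ge0) //.
apply: le_trans (weighted_cauchy_schwarz u_ge0 r_real) _.
rewrite chi2E in chi2_le.
exact: ler_pM (sumr_ge0 _ (fun i _ => u_ge0 i)) weighted_ge0 u_sum_le chi2_le.
Qed.

Theorem lemma8p5 (C : numClosedFieldType) (d T : nat)
    (sigma : 'M[C]_d) (gamma : C) (rhos : 'I_T -> 'M[C]_d)
    (U : 'M[C]_d) (q : 'I_d -> C) :
  (0 < T)%N ->
  density sigma ->
  0 < gamma ->
  psdmx (sigma - gamma%:M) ->
  (forall t, density (rhos t)) ->
  U \is unitarymx ->
  sigma = U *m diag_mx (\row_i q i) *m adjmx U ->
  let rho := (T%:R)^-1 *: \sum_(t < T) rhos t in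
  (T%:R)^-1 * \sum_(t < T) (1 + bures_chi2 U q (rhos t))
    <= sqrtC (d%:R / gamma) * sqrtC (bures_chi2 U q rho) + d%:R.
Proof.
move=> T_gt0 [_ sigma_tr] gamma_gt0 sigma_ge rhos_density U_unitary sigmaE /=.
set rho := (_ *: _).
have q_ge i : gamma <= q i := spectral_ge U_unitary sigmaE i sigma_ge.
have q_gt0 i : 0 < q i := lt_le_trans gamma_gt0 (q_ge i).
have [rho_psd rho_tr] : density rho := density_mean T_gt0 rhos_density.
pose p i := (adjmx U *m rho *m U) i i.
have pE i : p i = (T%:R)^-1 * \sum_t (adjmx U *m rhos t *m U) i i.
  by rewrite /p -scalemxAr -scalemxAl mulmx_sumr mulmx_suml mxE summxE.
have mean_le : (T%:R)^-1 * \sum_t (1 + bures_chi2 U q (rhos t)) <= \sum_i p i / q i.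
  have -> : \sum_i p i / q i =
      (T%:R)^-1 * \sum_t \sum_i (adjmx U *m rhos t *m U) i i / q i.
    rewrite exchange_big mulr_sumr; apply: eq_bigr => i _.
    by rewrite pE -mulrA mulr_suml.
  apply: ler_wpM2l; first by rewrite invr_ge0 ler0n.
  by apply: ler_sum => t _; exact: bures_chi2_le_diag.
apply: le_trans mean_le (sum_ratio_le_chi2 gamma_gt0 q_ge _ _ _ _).
- by move=> i; exact: ger0_real (psdmx_diag_ge0 i (psdmx_conj U rho_psd)).
- by rewrite -rho_tr -(mxtrace_unitary_conj rho U_unitary).
- by rewrite -(mxtrace_spectral U_unitary sigmaE) sigma_tr.
- exact: bures_chi2_ge_diag.
Qed.
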